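(* Let $\mathcal{I}$ be an interval hypergraph on $[n]$ containing all singletons. Then $P_{\mathcal{I}}$ is a distributive lattice if and only if $P_{\mathcal{I}}$ is isomorphic to a Cartesian product of chains.
   Context: An interval hypergraph on $[n]$ is a collection of intervals of $[n]$, by convention containing all singletons. An orientation is a map $O:\mathcal{I}\to[n]$ with $O(I)\in I$; it is acyclic if there are no $H_1,\dots,H_k$, $k\ge2$, with $O(H_{i+1})\in H_i\setminus\{O(H_i)\}$ for $i\in[k-1]$ and $O(H_1)\in H_k\setminus\{O(H_k)\}$. Orientations $O\ne O'$ are related by an increasing flip (from $O$ to $O'$) if there exist $1\le i<j\le n$ such that for all $H$: if $O(H)\ne O'(H)$ then $O(H)=i$, $O'(H)=j$; and if $\{i,j\}\subseteq H$ then $O(H)=i\iff O'(H)=j$. $P_{\mathcal{I}}$ is the transitive closure of the increasing flip relation on the acyclic orientations of $\mathcal{I}$. *)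

(* Vertices [n] are represented by 'I_n (0-indexed). *)
From Stdlib Require Import Relations.
From mathcomp Require Import all_boot.
Set Implicit Arguments. Unset Strict Implicit. Unset Printing Implicit Defensive.

Definition intv n (h : 'I_n * 'I_n) : {set 'I_n} :=
  [set k : 'I_n | (h.1 <= k) && (k <= h.2)].

Definition interval_hypergraph n (H : {set 'I_n * 'I_n}) : Prop :=
  (forall h, h \in H -> h.1 <= h.2) /\ (forall a : 'I_n, (a, a) \in H).

Notation edge H := {h | h \in H}.

Definition is_orientation n (H : {set 'I_n * 'I_n}) (O : {ffun edge H -> 'I_n}) : Prop :=
  forall e : edge H, O e \in intv (val e).

Definition cyc_step n (H : {set 'I_n * 'I_n}) (O : {ffun edge H -> 'I_n})
  (e1 e2 : edge H) : bool :=
  (O e2 \in intv (val e1)) && (O e2 != O e1).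

Definition is_acyclic n (H : {set 'I_n * 'I_n}) (O : {ffun edge H -> 'I_n}) : Prop :=
  ~ exists s : seq (edge H), 2 <= size s /\ cycle (cyc_step O) s.

Definition incr_flip n (H : {set 'I_n * 'I_n}) (O O' : {ffun edge H -> 'I_n}) : Prop :=
  O <> O' /\
  exists i j : 'I_n, i < j /\
    forall e : edge H,
      (O e <> O' e -> O e = i /\ O' e = j) /\
      ((i \in intv (val e)) && (j \in intv (val e)) -> (O e = i <-> O' e = j)).

Definition acyc_orient n (H : {set 'I_n * 'I_n}) : Type :=
  {O : {ffun edge H -> 'I_n} | is_orientation O /\ is_acyclic O}.

Definition P_le n (H : {set 'I_n * 'I_n}) : relation (acyc_orient H) :=
  clos_refl_trans (acyc_orient H)
    (fun O O' => incr_flip (proj1_sig O) (proj1_sig O')).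

Definition is_poset (T : Type) (le : relation T) : Prop :=
  (forall x, le x x) /\ (forall x y, le x y -> le y x -> x = y) /\
  (forall x y z, le x y -> le y z -> le x z).

Definition is_meet (T : Type) (le : relation T) (x y z : T) : Prop :=
  le z x /\ le z y /\ forall w, le w x -> le w y -> le w z.

Definition is_join (T : Type) (le : relation T) (x y z : T) : Prop :=
  le x z /\ le y z /\ forall w, le x w -> le y w -> le z w.

Definition distributive_lattice (T : Type) (le : relation T) : Prop :=
  is_poset le /\
  exists meet join : T -> T -> T,
    (forall x y, is_meet le x y (meet x y)) /\
    (forall x y, is_join le x y (join x y)) /\
    (forall x y z, meet x (join y z) = join (meet x y) (meet x z)).

Definition iso_product_of_chains (T : Type) (le : relation T) : Prop :=
  exists (k : nat) (m : 'I_k -> nat) (f : T -> forall i : 'I_k, 'I_(m i).+1),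
    bijective f /\
    forall x y, le x y <-> (forall i, f x i <= f y i).

(* P_I is the componentwise order on acyclic orientations: if O <= O' pointwise, let i
   be the largest head moved by O' and j the largest new head of an edge moved from i;
   redirecting to j every edge headed at i that contains j is an increasing flip that
   keeps acyclicity and stays below O'.

   If P_I is a distributive lattice, two configurations are excluded, each by explicit
   orientations chosen greedily by priority lists: hyperedges [a, b] and [c, d] with
   a < c < b < d but [c, b] not a hyperedge (then two orientations have no join), and
   hyperedges [a, b], [c, d] with a < c <= b < d inside a third one (then three
   orientations form a pentagon).

   Without these configurations, the proper sub-hyperedges of any hyperedge e that meet
   are nested. Call p a cut of e if no proper sub-hyperedge covers [p, p + 1]; the cuts
   split e into blocks. Acyclic orientations are exactly the consistent ones (the head
   of e, if it lies in a proper sub-hyperedge K, is the head of K), a consistent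
   orientation is determined by the block of each head, and every choice of blocks is
   realized. Hence P_I is the product over the hyperedges of the chains of blocks. *)

From Stdlib Require Import Relations ProofIrrelevance FunctionalExtensionality.
From mathcomp Require Import all_boot zify.
Set Implicit Arguments. Unset Strict Implicit. Unset Printing Implicit Defensive.

Section CycleMeasure.
Variables (T : eqType) (S : rel T) (f : T -> nat).

Lemma path_measure_backward (P : pred T) :
  (forall a b, S a b -> P b -> P a && (f b < f a)) ->
  forall x p, path S x p -> P (last x p) -> P x && (f (last x p) + size p <= f x).
Proof.
move=> step x p; elim: p x => [|y p IHp] x /=; first by move=> _ ->; rewrite addn0 leqnn.
case/andP=> xy /IHp yp /yp /andP [Py le_y]; have /andP [-> lt_xy] := step _ _ xy Py.
by rewrite addnS (leq_ltn_trans le_y lt_xy).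
Qed.

Lemma path_measure_forward (P : pred T) :
  (forall a b, S a b -> P a -> f b < f a) ->
  forall x p, path S x p -> all P (x :: p) -> f (last x p) + size p <= f x.
Proof.
move=> step x p; elim: p x => [|y p IHp] x /=; first by rewrite addn0.
case/andP=> xy yp /andP [Px Pyp]; rewrite addnS.
exact: leq_ltn_trans (IHp _ yp Pyp) (step _ _ xy Px).
Qed.

Lemma cycle_measure_backward (P : pred T) :
  (forall a b, S a b -> P b -> P a && (f b < f a)) ->
  forall s, cycle S s -> ~~ has P s.
Proof.
move=> step s cyc_s; apply/hasP => -[y /rot_to [i s' rot_s] Py].
have /(path_measure_backward step) : cycle S (y :: s') by rewrite -rot_s rot_cycle.
by rewrite last_rcons size_rcons => /(_ Py) /andP [_]; rewrite addnS ltnNge leq_addr.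
Qed.

Lemma cycle_measure_forward (P : pred T) :
  (forall a b, S a b -> P a -> f b < f a) ->
  forall s, cycle S s -> all P s -> s = [::].
Proof.
move=> step [//|x p] cyc_s all_s.
suff /(path_measure_forward step cyc_s) : all P (x :: rcons p x).
  by rewrite last_rcons size_rcons addnS ltnNge leq_addr.
by move: all_s; rewrite /= all_rcons; case: (P x).
Qed.

End CycleMeasure.

Lemma mem_intv n (h : 'I_n * 'I_n) (k : 'I_n) : (k \in intv h) = (h.1 <= k <= h.2).
Proof. by rewrite inE. Qed.

Lemma intv_between n (h : 'I_n * 'I_n) (a b k : 'I_n) :
  a \in intv h -> b \in intv h -> a <= k <= b -> k \in intv h.
Proof. rewrite !mem_intv; lia. Qed.

Section Acyclicity.
Variables (n : nat) (H : {set 'I_n * 'I_n}).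
Implicit Type O : {ffun edge H -> 'I_n}.

Lemma cyc_step_irr O e : cyc_step O e e = false.
Proof. by rewrite /cyc_step eqxx andbF. Qed.

Lemma acyclic_2cycle O e1 e2 : is_acyclic O ->
  O e2 \in intv (val e1) -> O e2 != O e1 -> O e1 \in intv (val e2) -> False.
Proof.
move=> acyc e21 ne e12; apply: acyc; exists [:: e1; e2]; split => //=.
by rewrite /cyc_step e21 ne e12 eq_sym ne.
Qed.

Lemma acyclic_cyc_stepP O :
  is_acyclic O <-> forall e1 e2, cyc_step O e1 e2 -> ~~ connect (cyc_step O) e2 e1.
Proof.
split=> [acyc e1 e2 step12 | noback [s [size_s cyc_s]]].
  apply/negP => /connectP [p p_path p_last]; apply: acyc.
  exists (e2 :: p); split; last by rewrite /cycle rcons_path p_path /= -p_last.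
  by case: p p_last {p_path} => [/= e21|//]; rewrite e21 cyc_step_irr in step12.
case: s size_s cyc_s => [|e1 [|e2 s]] //= _ /[!rcons_path] /andP [/andP [e21 ne] /andP [p last1]].
have step12 : cyc_step O e1 e2 by rewrite /cyc_step e21 ne.
apply/negP: (noback e1 e2 step12); rewrite negbK; apply/connectP.
by exists (rcons s e1); rewrite ?last_rcons // rcons_path p.
Qed.

Definition vstep O : rel 'I_n :=
  fun u v => [exists e, (u \in intv (val e)) && (O e == v) && (u != v)].

Lemma vstepP O u v :
  reflect (exists e, [/\ u \in intv (val e), O e = v & u != v]) (vstep O u v).
Proof.
apply: (iffP existsP) => [[e /andP [/andP [ue /eqP Oe] uv]] | [e [ue Oe uv]]].
  by exists e.
by exists e; rewrite ue Oe eqxx uv.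
Qed.

Lemma vstep_cyc_step O e1 e2 : cyc_step O e1 e2 -> vstep O (O e2) (O e1).
Proof. by case/andP=> e21 ne; apply/vstepP; exists e1. Qed.

Lemma connect_vstep_cyc_step O e1 e2 :
  connect (cyc_step O) e1 e2 -> connect (vstep O) (O e2) (O e1).
Proof.
move=> /connectP [p + ->]; elim: p e1 => [|e p IHp] e1 /=; first by rewrite connect0.
by case/andP=> /vstep_cyc_step/connect1 step /IHp /connect_trans; apply.
Qed.

Lemma path_vstep_cyc_step O u p : path (vstep O) u p -> forall e, O e = u ->
  exists2 e', connect (cyc_step O) e' e & O e' = last u p.
Proof.
elim: p u => [|v p IHp] u /=; first by move=> _ e Oe; exists e; rewrite ?connect0.
case/andP=> /vstepP [f [uf Of uv]] /IHp /(_ f Of) [e' e'f Oe'] e Oe.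
exists e' => //; apply: connect_trans e'f (connect1 _).
by rewrite /cyc_step Oe uf Of uv.
Qed.

Lemma acyclic_vstepP O :
  is_acyclic O <-> forall u v, vstep O u v -> ~~ connect (vstep O) v u.
Proof.
rewrite acyclic_cyc_stepP; split=> [noback u v | noback e1 e2 step12].
  case/vstepP=> [e [ue Oe uv]]; apply/negP => /connectP [p p_path p_last].
  have [e' e'e Oe'] := path_vstep_cyc_step p_path Oe.
  have step : cyc_step O e e' by rewrite /cyc_step Oe' -p_last ue Oe uv.
  by move: (noback _ _ step); rewrite e'e.
apply/negP => /connect_vstep_cyc_step back.
by move: (noback _ _ (vstep_cyc_step step12)); rewrite back.
Qed.

Lemma acyclic_of_rank O (rk : 'I_n -> nat) :
  (forall e u, u \in intv (val e) -> u != O e -> rk u < rk (O e)) -> is_acyclic O.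
Proof.
move=> rk_head; have rk_vstep u v : vstep O u v -> rk u < rk v.
  by case/vstepP=> e [ue <- uv]; apply: rk_head.
have rk_connect a b : connect (vstep O) a b -> rk a <= rk b.
  move=> /connectP [p + ->]; elim: p a => [|c p IHp] a //= /andP [/rk_vstep ac /IHp].
  exact/leq_trans/ltnW.
apply/acyclic_vstepP => u v /rk_vstep uv; apply/negP => /rk_connect.
by rewrite leqNgt uv.
Qed.

Lemma vstep_side O (v v' w : 'I_n) :
  is_orientation O -> is_acyclic O ->
  vstep O v v' -> connect (vstep O) v' w -> v' != w -> (w < v) = (w < v').
Proof.
move=> ori acyc /vstepP [G [vG OG vv']] v'w neq.
have [//|side] := eqVneq (w < v) (w < v').
have wG : w \in intv (val G).
  by move: (ori G) vG side neq; rewrite OG !mem_intv; case: ltnP; case: ltnP => //=; lia.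
have wv' : vstep O w v' by apply/vstepP; exists G; rewrite eq_sym.
by move/acyclic_vstepP: acyc => /(_ _ _ wv'); rewrite v'w.
Qed.

End Acyclicity.

Definition gap n (H : {set 'I_n * 'I_n}) (x y : {ffun edge H -> 'I_n}) : nat :=
  \sum_e (y e - x e).

Lemma gap_lt n (H : {set 'I_n * 'I_n}) (x z y : {ffun edge H -> 'I_n}) e0 :
  (forall e, x e <= z e) -> (forall e, z e <= y e) -> x e0 < z e0 -> gap z y < gap x y.
Proof.
move=> xz zy xz0; rewrite /gap (bigD1 e0) // [X in _ < X](bigD1 e0) //= -addSn.
apply: leq_add; first by rewrite ltn_sub2l // (leq_trans xz0).
by apply: leq_sum => e _; rewrite leq_sub2l.
Qed.

Section IncreasingFlip.
Variables (n : nat) (H : {set 'I_n * 'I_n}).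
Notation ori := {ffun edge H -> 'I_n}.
Variables x y : ori.
Hypotheses (x_ori : is_orientation x) (y_ori : is_orientation y).
Hypotheses (x_acyc : is_acyclic x) (y_acyc : is_acyclic y).
Hypothesis x_le_y : forall e, x e <= y e.

Variables (i j : 'I_n) (ej : edge H).
Hypothesis i_max : forall e, x e != y e -> x e <= i.
Hypothesis j_max : forall e, x e != y e -> x e = i -> y e <= j.
Hypotheses (x_ej : x ej = i) (y_ej : y ej = j) (x_neq_y_ej : x ej != y ej).

Lemma i_lt_j : i < j.
Proof. by rewrite -x_ej -y_ej ltn_neqAle x_neq_y_ej x_le_y. Qed.

Lemma i_in_ej : i \in intv (val ej). Proof. by rewrite -x_ej x_ori. Qed.
Lemma j_in_ej : j \in intv (val ej). Proof. by rewrite -y_ej y_ori. Qed.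

Definition moved e := (x e == i) && (j \in intv (val e)).

Lemma x_neq_j e : i \in intv (val e) -> j \in intv (val e) -> x e != j.
Proof.
move=> ie je; apply/eqP => xe; apply: (acyclic_2cycle x_acyc (e1 := ej) (e2 := e)).
- by rewrite xe j_in_ej.
- by rewrite xe x_ej eq_sym neq_ltn i_lt_j.
- by rewrite x_ej.
Qed.

Lemma y_moved e : moved e -> y e = j.
Proof.
case/andP=> /eqP xe je.
have j_le_y : j <= y e.
  rewrite leqNgt; apply/negP => y_lt_j.
  apply: (acyclic_2cycle y_acyc (e1 := ej) (e2 := e)); rewrite ?y_ej //.
  - by apply: (intv_between i_in_ej j_in_ej); rewrite (ltnW y_lt_j) -xe x_le_y.
  - by rewrite neq_ltn y_lt_j.
have ne : x e != y e by rewrite neq_ltn xe (leq_trans i_lt_j j_le_y).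
by apply/val_inj/eqP; rewrite eqn_leq j_le_y j_max.
Qed.

Definition xflip : ori := [ffun e => if moved e then j else x e].

Lemma xflip_ori : is_orientation xflip.
Proof. by move=> e; rewrite ffunE; case: ifP => [/andP [] | _]. Qed.

Lemma x_le_xflip e : x e <= xflip e.
Proof. by rewrite ffunE; case: ifP => // /andP [/eqP -> _]; apply: ltnW i_lt_j. Qed.

Lemma xflip_le_y e : xflip e <= y e.
Proof. by rewrite ffunE; case: ifP => [/y_moved -> | _]. Qed.

Lemma x_lt_xflip_ej : x ej < xflip ej.
Proof. by rewrite ffunE /moved x_ej eqxx j_in_ej i_lt_j. Qed.

Lemma incr_flip_xflip : incr_flip x xflip.
Proof.
split=> [xx | ]; first by move: x_lt_xflip_ej; rewrite xx ltnn.
exists i, j; split=> [|e]; first exact: i_lt_j.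
rewrite ffunE; split=> [|/andP [ie je]]; first by case: ifP => [/andP [/eqP] | ].
split=> [xe | ]; first by rewrite /moved xe eqxx je.
by case: ifP => [/andP [/eqP] // | _ xe]; move: (x_neq_j ie je); rewrite xe eqxx.
Qed.

Definition kept_step : rel 'I_n := fun u v =>
  [exists e, ~~ moved e && (u \in intv (val e)) && (x e == v) && (u != v)].

(* The feeders are the vertices that get a new arc towards [j]. *)
Definition feeder v := (v != j) && [exists e, moved e && (v \in intv (val e))].

Lemma kept_stepP u v : reflect
  (exists e, [/\ ~~ moved e, u \in intv (val e), x e = v & u != v]) (kept_step u v).
Proof.
apply: (iffP existsP) => [[e /andP [/andP [/andP [me ue] /eqP xe] uv]] | [e [me ue xe uv]]].
  by exists e.
by exists e; rewrite me ue xe eqxx uv.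
Qed.

Lemma feederP v :
  reflect (v != j /\ exists2 e, moved e & v \in intv (val e)) (feeder v).
Proof.
apply: (iffP andP) => [[vj /existsP [e /andP [me ve]]] | [vj [e me ve]]].
  by split=> //; exists e.
by split=> //; apply/existsP; exists e; rewrite me ve.
Qed.

Lemma j_not_feeder : ~~ feeder j.
Proof. by rewrite /feeder eqxx. Qed.

Lemma kept_step_x u v : kept_step u v -> vstep x u v.
Proof. by case/kept_stepP=> e [_ ue xe uv]; apply/vstepP; exists e. Qed.

Lemma kept_step_xflip u v : kept_step u v -> vstep xflip u v.
Proof.
by case/kept_stepP=> e [me ue xe uv]; apply/vstepP; exists e; rewrite ffunE (negbTE me).
Qed.

Lemma vstep_xflip_cases u v : vstep xflip u v -> kept_step u v \/ feeder u /\ v = j.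
Proof.
case/vstepP=> e [ue + uv]; rewrite ffunE; case: ifP => me xe.
  by right; split=> //; apply/feederP; split; [rewrite -xe in uv | exists e].
by left; apply/kept_stepP; exists e; rewrite me.
Qed.

Lemma connect_xflip_cases a b : connect (vstep xflip) a b ->
  connect kept_step a b \/
  exists t, [/\ feeder t, connect (vstep xflip) a t & connect kept_step j b].
Proof.
move=> /connectP [p + ->]; elim: p a => [|c p IHp] a /=; first by left.
case/andP=> ac /IHp [ck | [t [ft ct jk]]].
- case: (vstep_xflip_cases ac) ck => [ac' ck | [fa ->] ck].
    by left; apply: connect_trans (connect1 ac') ck.
  by right; exists a; split=> //; apply: connect0.
- by right; exists t; split=> //; apply: connect_trans (connect1 ac) ct.
Qed.

Definition quiet_step : rel 'I_n := fun u v => kept_step u v && ~~ feeder u.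

Lemma first_feeder a p : path kept_step a p -> ~~ feeder a -> feeder (last a p) ->
  exists2 w, feeder w & connect quiet_step a w.
Proof.
elim: p a => [|b p IHp] a /=; first by move=> _ /negbTE ->.
case/andP=> ab bp fa fp; have ab' : quiet_step a b by rewrite /quiet_step ab fa.
have [fb | nfb] := boolP (feeder b); first by exists b; rewrite ?connect1.
by have [w fw bw] := IHp b bp nfb fp; exists w; rewrite // (connect_trans (connect1 ab')).
Qed.

(* By [vstep_side], a path of [x] towards [w] never jumps over [w]. *)
Lemma quiet_path_last_step v p (w := last v p) : path quiet_step v p -> v != w ->
  exists v0 G, [/\ ~~ moved G, v0 \in intv (val G), x G = w, ~~ feeder v0
                 & (w < v) = (w < v0)].
Proof.
rewrite {}/w; elim: p v => [|v' p IHp] v /=; first by rewrite eqxx.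
case/andP=> /andP [vv' fv] v'p vw.
have [v'w | v'w] := eqVneq v' (last v' p).
  by case/kept_stepP: vv' => G [mG vG xG _]; exists v, G; rewrite -v'w.
have [v0 [G [mG v0G xG fv0 side]]] := IHp v' v'p v'w; exists v0, G; split=> //.
rewrite -side; apply: (vstep_side x_ori x_acyc (kept_step_x vv')) => //.
apply/connectP; exists p => //; apply: sub_path v'p => a b /andP [ab _].
exact: kept_step_x.
Qed.

Lemma kept_head_not_feeder G Hc : ~~ moved G -> moved Hc ->
  j \in intv (val G) -> x G \in intv (val Hc) -> x G != j -> False.
Proof.
move=> mG mHc jG xGHc xGj; have [/eqP xHc jHc] := andP mHc.
have [lt_i | gt_i | eq_i] := ltngtP (x G) i.
- apply: (acyclic_2cycle x_acyc (e1 := G) (e2 := Hc)); rewrite ?xHc //.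
    apply: (intv_between (x_ori G) jG); rewrite (ltnW lt_i); exact: ltnW i_lt_j.
  by rewrite neq_ltn lt_i orbT.
- have xyG : x G = y G by apply/eqP; apply: contraTT gt_i => /i_max; rewrite ltnNge => ->.
  apply: (acyclic_2cycle y_acyc (e1 := G) (e2 := Hc)); rewrite ?(y_moved mHc) -?xyG //.
  by rewrite eq_sym.
- have xGi : x G = i by apply: val_inj.
  by rewrite /moved xGi eqxx jG in mG.
Qed.

Lemma feeder_unreachable t : feeder t -> ~~ connect kept_step j t.
Proof.
move=> ft; apply/negP => /connectP [p jp tp]; rewrite tp in ft.
have [w fw /connectP [q jq wq]] := first_feeder jp j_not_feeder ft.
have /feederP [wj [Hc mHc wHc]] := fw.
have jw : j != last j q by rewrite -wq eq_sym.
have [v0 [G [mG v0G xG fv0 side]]] := quiet_path_last_step jq jw.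
rewrite -wq in xG side; have jHc := proj2 (andP mHc).
have wG : w \in intv (val G) by rewrite -xG x_ori.
have jG : j \in intv (val G).
  apply: contraT => jG; case/negP: fv0; apply/feederP; split; last first.
    by exists Hc => //; move: wHc jHc v0G wG jG side; rewrite !mem_intv; lia.
  by apply: contraNneq jG => <-.
by apply: (kept_head_not_feeder mG mHc jG); rewrite xG.
Qed.

Lemma xflip_acyclic : is_acyclic xflip.
Proof.
have connect_from_j b : connect (vstep xflip) j b -> connect kept_step j b.
  by case/connect_xflip_cases => [// | [t []]].
apply/acyclic_vstepP => u v uv; apply/negP => vu.
case: (vstep_xflip_cases uv) => [kuv | [fu vj]]; last first.
  by rewrite vj in vu; case/negP: (feeder_unreachable fu); apply: connect_from_j.
case: (connect_xflip_cases vu) => [kvu | [t [ft vt ju]]].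
  move/acyclic_vstepP: x_acyc => /(_ _ _ (kept_step_x kuv)) /negP; apply.
  exact: connect_sub (fun a b ab => connect1 (kept_step_x ab)) _ _ kvu.
case/negP: (feeder_unreachable ft); apply: connect_from_j.
apply: connect_trans (connect_trans _ (connect1 (kept_step_xflip kuv))) vt.
exact: connect_sub (fun a b ab => connect1 (kept_step_xflip ab)) _ _ ju.
Qed.

Lemma xflip_towards_y :
  [/\ is_orientation xflip, is_acyclic xflip, incr_flip x xflip,
       forall e, xflip e <= y e & gap xflip y < gap x y].
Proof.
split; [exact: xflip_ori | exact: xflip_acyclic | exact: incr_flip_xflip
       | exact: xflip_le_y | exact: gap_lt x_le_xflip xflip_le_y x_lt_xflip_ej].
Qed.

End IncreasingFlip.

Section PointwiseOrder.
Variables (n : nat) (H : {set 'I_n * 'I_n}).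
Notation ori := {ffun edge H -> 'I_n}.

Lemma incr_flip_le (O O' : ori) : incr_flip O O' -> forall e, O e <= O' e.
Proof.
case=> _ [i [j [ij flip]]] e; have [-> // | ne] := eqVneq (O e) (O' e).
by have [-> ->] := (flip e).1 (elimN eqP ne); apply: ltnW.
Qed.

Lemma P_le_le (x y : acyc_orient H) : P_le x y -> forall e, sval x e <= sval y e.
Proof.
elim=> [a b /incr_flip_le // | // | a b c _ ab _ bc] e.
exact: leq_trans (ab e) (bc e).
Qed.

Lemma acyc_orient_inj (x y : acyc_orient H) : sval x = sval y -> x = y.
Proof.
case: x y => [x px] [y py] /= xy; subst y.
by rewrite (proof_irrelevance _ px py).
Qed.

Lemma P_le_anti (x y : acyc_orient H) : P_le x y -> P_le y x -> x = y.
Proof.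
move=> /P_le_le xy /P_le_le yx; apply/acyc_orient_inj/ffunP => e.
by apply/val_inj/eqP; rewrite eqn_leq xy yx.
Qed.

Lemma exists_incr_flip_towards (x y : ori) :
  is_orientation x -> is_orientation y -> is_acyclic x -> is_acyclic y ->
  (forall e, x e <= y e) -> x != y ->
  exists z : ori, [/\ is_orientation z, is_acyclic z, incr_flip x z,
                      forall e, z e <= y e & gap z y < gap x y].
Proof.
move=> x_ori y_ori x_acyc y_acyc x_le_y /eqP xy.
have [e0 ne0] : exists e0, x e0 != y e0.
  apply/existsP; apply: contraT => /existsPn same; exfalso; apply: xy.
  by apply/ffunP => e; apply/eqP/negbNE/same.
have [ei nei i_max] := @arg_maxnP _ e0 (fun e => x e != y e) (fun e => x e : nat) ne0.
have [ej /andP [ne /eqP x_ej] j_max] := @arg_maxnP _ ei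
  (fun e => (x e != y e) && (x e == x ei)) (fun e => y e : nat) (introT andP (conj nei (eqxx _))).
exists (xflip x (x ei) (y ej)).
apply: (xflip_towards_y x_ori y_ori x_acyc y_acyc x_le_y _ _ x_ej (erefl _) ne) => e ne_e.
  exact: i_max.
by move=> /eqP xe; apply: j_max; rewrite ne_e xe.
Qed.

Lemma le_P_le (x y : acyc_orient H) : (forall e, sval x e <= sval y e) -> P_le x y.
Proof.
move=> xy; have [k] := ubnP (gap (sval x) (sval y)); elim: k x xy => // k IHk x xy gap_xy.
have [[x_ori x_acyc] [y_ori y_acyc]] := (proj2_sig x, proj2_sig y).
have [eq_xy | ne_xy] := eqVneq (sval x) (sval y).
  by rewrite (acyc_orient_inj eq_xy); apply: rt_refl.
have [z [z_ori z_acyc xz zy gap_zy]] :=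
  exists_incr_flip_towards x_ori y_ori x_acyc y_acyc xy ne_xy.
apply: (rt_trans _ _ _ (exist _ z (conj z_ori z_acyc))); first exact: rt_step.
by apply: IHk => //; apply: leq_trans gap_zy _.
Qed.

Lemma P_leP (x y : acyc_orient H) : P_le x y <-> forall e, sval x e <= sval y e.
Proof. by split; [apply: P_le_le | apply: le_P_le]. Qed.

Lemma is_meet_idl (x y z : acyc_orient H) : is_meet (@P_le n H) x y z -> P_le x y -> z = x.
Proof. by case=> zx [zy z_max] xy; apply: P_le_anti zx (z_max _ (rt_refl _ _ _) xy). Qed.

Lemma is_meet_idr (x y z : acyc_orient H) : is_meet (@P_le n H) x y z -> P_le y x -> z = y.
Proof. by case=> zx [zy z_max] yx; apply: P_le_anti zy (z_max _ yx (rt_refl _ _ _)). Qed.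

Lemma is_join_idl (x y z : acyc_orient H) : is_join (@P_le n H) x y z -> P_le y x -> z = x.
Proof. by case=> xz [yz z_min] yx; apply: P_le_anti (z_min _ (rt_refl _ _ _) yx) xz. Qed.

End PointwiseOrder.

Section RankedChoice.
Variables (n : nat) (H : {set 'I_n * 'I_n}).
Hypothesis H_intv : interval_hypergraph H.

Lemma edge_le (e : edge H) : (val e).1 <= (val e).2.
Proof. exact: H_intv.1 _ (valP e). Qed.

Definition ranked_choice (f : 'I_n * 'I_n -> 'I_n) (rk : 'I_n -> nat) :=
  forall p : 'I_n * 'I_n, p.1 <= p.2 ->
    p.1 <= f p <= p.2 /\
    forall u : 'I_n, p.1 <= u <= p.2 -> (u : nat) != f p -> rk u < rk (f p).

Definition orient_by (f : 'I_n * 'I_n -> 'I_n) : {ffun edge H -> 'I_n} :=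
  [ffun e => f (val e)].

Lemma orient_by_acyc f rk :
  ranked_choice f rk -> is_orientation (orient_by f) /\ is_acyclic (orient_by f).
Proof.
move=> f_rk; split=> [e | ]; first by rewrite ffunE mem_intv; apply: (f_rk _ (edge_le e)).1.
apply: (acyclic_of_rank (rk := rk)) => e u; rewrite ffunE mem_intv => ue ne.
exact: (f_rk _ (edge_le e)).2.
Qed.

Definition acyc_orient_by f rk (f_rk : ranked_choice f rk) : acyc_orient H :=
  exist _ (orient_by f) (orient_by_acyc f_rk).

Lemma acyc_orient_byE f rk (f_rk : ranked_choice f rk) e :
  sval (acyc_orient_by f_rk) e = f (val e).
Proof. by rewrite /= ffunE. Qed.

Lemma P_le_orient_by f rk (f_rk : ranked_choice f rk) g rk' (g_rk : ranked_choice g rk') :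
  (forall p, p \in H -> f p <= g p) -> P_le (acyc_orient_by f_rk) (acyc_orient_by g_rk).
Proof. by move=> fg; apply/P_leP => e; rewrite !acyc_orient_byE fg ?(valP e). Qed.

End RankedChoice.

Ltac solve_ranked_choice :=
  let p := fresh "p" in let u := fresh "u" in
  move=> p ?; split; [ | move=> u ?];
  have := ltn_ord p.1; have := ltn_ord p.2; try have := ltn_ord u;
  rewrite /=; repeat case: ifP; simpl; lia.

Definition overlap_closed n (H : {set 'I_n * 'I_n}) := forall a b c d : 'I_n,
  (a, b) \in H -> (c, d) \in H -> a < c -> c < b -> b < d -> (c, b) \in H.

Definition no_nested_overlap n (H : {set 'I_n * 'I_n}) := forall a b c d l r : 'I_n,
  (a, b) \in H -> (c, d) \in H -> (l, r) \in H ->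
  l <= a -> a < c -> c <= b -> b < d -> d <= r -> False.

Section NoJoin.
Variables (n : nat) (H : {set 'I_n * 'I_n}).
Hypothesis H_intv : interval_hypergraph H.
Variables a b c d : 'I_n.
Hypotheses (a_lt_c : a < c) (c_lt_b : c < b) (b_lt_d : b < d).

Definition fX (p : 'I_n * 'I_n) : 'I_n :=
  if p.1 <= c <= p.2 then c else if p.1 <= b <= p.2 then b else p.2.
Definition rkX (u : 'I_n) : nat :=
  if u == c :> nat then (n + n).+2 else if u == b :> nat then (n + n).+1 else u.
Definition fY (p : 'I_n * 'I_n) : 'I_n :=
  if p.1 <= a <= p.2 then a else if p.1 <= b <= p.2 then b else
  if p.1 <= c <= p.2 then c else p.2.
Definition rkY (u : 'I_n) : nat :=
  if u == a :> nat then (n + n).+3 else if u == b :> nat then (n + n).+2 else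
  if u == c :> nat then (n + n).+1 else u.
Definition fU1 (p : 'I_n * 'I_n) : 'I_n :=
  if (p.1 <= c <= p.2) && (p.2 <= b) then c else p.2.
Definition rkU1 (u : 'I_n) : nat := if u == c :> nat then (b + b).+1 else u + u.
Definition fU2 (p : 'I_n * 'I_n) : 'I_n := if p.1 <= b <= p.2 then b else p.2.
Definition rkU2 (u : 'I_n) : nat := if u == b :> nat then (n + n).+1 else u.

Lemma fX_ranked : ranked_choice fX rkX.
Proof. rewrite /ranked_choice /fX /rkX; solve_ranked_choice. Qed.
Lemma fY_ranked : ranked_choice fY rkY.
Proof. rewrite /ranked_choice /fY /rkY; solve_ranked_choice. Qed.
Lemma fU1_ranked : ranked_choice fU1 rkU1.
Proof. rewrite /ranked_choice /fU1 /rkU1; solve_ranked_choice. Qed.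
Lemma fU2_ranked : ranked_choice fU2 rkU2.
Proof. rewrite /ranked_choice /fU2 /rkU2; solve_ranked_choice. Qed.

(* Needed for [Y <= U1]: [Y] orients an edge [(p1, b)] with [a < p1 <= c] to [b],
   and [U1] to [c]. *)
Hypothesis a_max : forall p : 'I_n * 'I_n, p \in H -> p.2 = b :> nat -> a < p.1 <= c -> False.
Hypotheses (ab_in : (a, b) \in H) (cd_in : (c, d) \in H).

Lemma fX_le_fU1 (p : 'I_n * 'I_n) : p.1 <= p.2 -> fX p <= fU1 p.
Proof. by rewrite /fX /fU1 => p_le; repeat (case: ifP => /=); lia. Qed.

Lemma fX_le_fU2 (p : 'I_n * 'I_n) : p.1 <= p.2 -> fX p <= fU2 p.
Proof. by rewrite /fX /fU2 => p_le; repeat (case: ifP => /=); lia. Qed.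

Lemma fY_le_fU2 (p : 'I_n * 'I_n) : p.1 <= p.2 -> fY p <= fU2 p.
Proof. by rewrite /fY /fU2 => p_le; repeat (case: ifP => /=); lia. Qed.

Lemma fY_le_fU1 (p : 'I_n * 'I_n) : p \in H -> fY p <= fU1 p.
Proof.
move=> pH; have := H_intv.1 p pH; rewrite /fY /fU1.
case: ifP => p_a p_le; first by case: ifP; lia.
case: ifP => p_b; last by repeat (case: ifP => /=); lia.
case: ifP => p_c; last lia.
by case: (a_max pH); lia.
Qed.

(* [U1] and [U2] are both upper bounds of [X] and [Y]; squeezed between them, a join
   would orient [(a, b)] to [c] and [(c, d)] to [b], which is a 2-cycle. *)
Lemma no_join_XY z :
  ~ is_join (@P_le n H) (acyc_orient_by H_intv fX_ranked) (acyc_orient_by H_intv fY_ranked) z.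
Proof.
have p_le p : p \in H -> p.1 <= p.2 := H_intv.1 p.
case=> Xz [Yz z_min].
have /P_leP zU1 : P_le z (acyc_orient_by H_intv fU1_ranked).
  by apply: z_min; apply: P_le_orient_by => p pH; rewrite ?fX_le_fU1 ?fY_le_fU1 ?p_le.
have /P_leP zU2 : P_le z (acyc_orient_by H_intv fU2_ranked).
  by apply: z_min; apply: P_le_orient_by => p pH; rewrite ?fX_le_fU2 ?fY_le_fU2 ?p_le.
move/P_leP: Xz => Xz; move/P_leP: Yz => Yz.
pose eA : edge H := exist _ (a, b) ab_in; pose eB : edge H := exist _ (c, d) cd_in.
have zA : sval z eA = c.
  apply/val_inj/eqP; move: (Xz eA) (zU1 eA); rewrite !acyc_orient_byE /fX /fU1 /=.
  by repeat (case: ifP => /=); lia.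
have zB : sval z eB = b.
  apply/val_inj/eqP; move: (Yz eB) (zU2 eB); rewrite !acyc_orient_byE /fY /fU2 /=.
  by repeat (case: ifP => /=); lia.
apply: (acyclic_2cycle (proj2 (proj2_sig z)) (e1 := eA) (e2 := eB)).
- by rewrite zB mem_intv /=; lia.
- by rewrite zA zB neq_ltn c_lt_b orbT.
- by rewrite zA mem_intv /=; lia.
Qed.

End NoJoin.

Lemma joins_overlap_closed n (H : {set 'I_n * 'I_n}) (H_intv : interval_hypergraph H) :
  (forall x y : acyc_orient H, exists z, is_join (@P_le n H) x y z) -> overlap_closed H.
Proof.
move=> joins a0 b c d a0b cd a0c cb bd; apply: contraT => cb_out.
have [a /andP [ab ac] a_max] :=
  @arg_maxnP _ a0 (fun k : 'I_n => ((k, b) \in H) && (k < c)) val (introT andP (conj a0b a0c)).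
have [z jz] := joins (acyc_orient_by H_intv (fX_ranked ac cb bd))
                     (acyc_orient_by H_intv (fY_ranked ac cb bd)).
exfalso; apply: (no_join_XY _ ab cd jz) => -[k k'] kk' /= k'b /andP [ak kc].
have k'b' : k' = b by apply: val_inj.
rewrite {}k'b' in kk'; move: kc; rewrite leq_eqVlt => /orP [/eqP kc | kc].
  by move: cb_out; rewrite -(val_inj kc) kk'.
by move: (a_max k); rewrite kk' kc /= leqNgt ak => /(_ isT).
Qed.

Section Pentagon.
Variables (n : nat) (H : {set 'I_n * 'I_n}).
Hypothesis H_intv : interval_hypergraph H.
Variables a b c d : 'I_n.
Hypotheses (a_lt_c : a < c) (c_le_b : c <= b) (b_lt_d : b < d).

Definition fP (p : 'I_n * 'I_n) : 'I_n := if p.1 <= c <= p.2 then c else p.2.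
Definition rkP (u : 'I_n) : nat := if u == c :> nat then (n + n).+1 else u.
Definition fQ1 (p : 'I_n * 'I_n) : 'I_n :=
  if p.1 <= a <= p.2 then a else if p.1 <= d <= p.2 then d else p.2.
Definition rkQ1 (u : 'I_n) : nat :=
  if u == a :> nat then (n + n).+2 else if u == d :> nat then (n + n).+1 else u.
Definition fQ2 (p : 'I_n * 'I_n) : 'I_n :=
  if p.1 <= d <= p.2 then d else if p.1 <= a <= p.2 then a else p.2.
Definition rkQ2 (u : 'I_n) : nat :=
  if u == d :> nat then (n + n).+2 else if u == a :> nat then (n + n).+1 else u.

Lemma fP_ranked : ranked_choice fP rkP.
Proof. rewrite /ranked_choice /fP /rkP; solve_ranked_choice. Qed.
Lemma fQ1_ranked : ranked_choice fQ1 rkQ1.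
Proof. rewrite /ranked_choice /fQ1 /rkQ1; solve_ranked_choice. Qed.
Lemma fQ2_ranked : ranked_choice fQ2 rkQ2.
Proof. rewrite /ranked_choice /fQ2 /rkQ2; solve_ranked_choice. Qed.

Lemma fQ1_le_fQ2 (p : 'I_n * 'I_n) : p.1 <= p.2 -> fQ1 p <= fQ2 p.
Proof. by rewrite /fQ1 /fQ2 => p_le; repeat (case: ifP => /=); lia. Qed.

Lemma fQ2_le_fQ1 (p : 'I_n * 'I_n) : p.1 <= p.2 ->
  ~~ ((p.1 <= a <= p.2) && (p.1 <= d <= p.2)) -> fQ2 p <= fQ1 p.
Proof. by rewrite /fQ1 /fQ2 => p_le; repeat (case: ifP => /=); lia. Qed.

Hypotheses (ab_in : (a, b) \in H) (cd_in : (c, d) \in H).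

Lemma le_fP_fQ2_le_fQ1 (w : {ffun edge H -> 'I_n}) : is_orientation w -> is_acyclic w ->
  (forall e, w e <= fP (val e)) -> (forall e, w e <= fQ2 (val e)) ->
  forall e, w e <= fQ1 (val e).
Proof.
move=> w_ori w_acyc wP wQ2 e; pose eA : edge H := exist _ (a, b) ab_in.
have wA : w eA = a.
  apply/val_inj/eqP; move: (wQ2 eA) (w_ori eA); rewrite mem_intv /fQ2 /=.
  by repeat (case: ifP => /=); lia.
have e_le := edge_le H_intv e.
have [/andP [ae de] | not_ad] :=
  boolP (((val e).1 <= a <= (val e).2) && ((val e).1 <= d <= (val e).2));
  last exact: leq_trans (wQ2 e) (fQ2_le_fQ1 e_le not_ad).
have -> : fQ1 (val e) = a by rewrite /fQ1 ae.
rewrite leqNgt; apply/negP => a_lt_we.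
have c_in : (val e).1 <= c <= (val e).2.
  by case/andP: ae => ? _; case/andP: de => _ ?; apply/andP; split; lia.
have we_le_c : w e <= c by move: (wP e); rewrite /fP c_in.
apply: (acyclic_2cycle w_acyc (e1 := eA) (e2 := e)).
- by rewrite /eA mem_intv /= (ltnW a_lt_we) (leq_trans we_le_c c_le_b).
- by rewrite wA neq_ltn a_lt_we orbT.
- by rewrite wA mem_intv.
Qed.

Lemma ge_fP_fQ1_ge_fQ2 (w : {ffun edge H -> 'I_n}) : is_orientation w -> is_acyclic w ->
  (forall e, fP (val e) <= w e) -> (forall e, fQ1 (val e) <= w e) ->
  forall e, fQ2 (val e) <= w e.
Proof.
move=> w_ori w_acyc Pw Q1w e; pose eB : edge H := exist _ (c, d) cd_in.
have wB : w eB = d.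
  apply/val_inj/eqP; move: (Q1w eB) (w_ori eB); rewrite mem_intv /fQ1 /=.
  by repeat (case: ifP => /=); lia.
have e_le := edge_le H_intv e.
have [/andP [ae de] | not_ad] :=
  boolP (((val e).1 <= a <= (val e).2) && ((val e).1 <= d <= (val e).2));
  last exact: leq_trans (fQ2_le_fQ1 e_le not_ad) (Q1w e).
have -> : fQ2 (val e) = d by rewrite /fQ2 de.
rewrite leqNgt; apply/negP => we_lt_d.
have c_in : (val e).1 <= c <= (val e).2.
  by case/andP: ae => ? _; case/andP: de => _ ?; apply/andP; split; lia.
have c_le_we : c <= w e by move: (Pw e); rewrite /fP c_in.
apply: (acyclic_2cycle w_acyc (e1 := eB) (e2 := e)).
- by rewrite /eB mem_intv /= c_le_we (ltnW we_lt_d).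
- by rewrite wB neq_ltn we_lt_d.
- by rewrite wB mem_intv.
Qed.

Variables l r : 'I_n.
Hypotheses (lr_in : (l, r) \in H) (l_le_a : l <= a) (d_le_r : d <= r).

(* [Q1 <= Q2], [Q2 <= join Q1 P] and [meet Q2 P <= Q1] form a pentagon, while [Q1] and
   [Q2] differ on [(l, r)]. *)
Lemma pentagon_not_distributive : ~ distributive_lattice (@P_le n H).
Proof.
case=> _ [meet [join [meetP [joinP distr]]]].
pose Q1 := acyc_orient_by H_intv fQ1_ranked; pose Q2 := acyc_orient_by H_intv fQ2_ranked.
pose P := acyc_orient_by H_intv fP_ranked.
have Q1_le_Q2 : P_le Q1 Q2.
  by apply: P_le_orient_by => p /(H_intv.1 p); apply: fQ1_le_fQ2.
have Q2_le_join : P_le Q2 (join Q1 P).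
  have [/P_leP Q1j [/P_leP Pj _]] := joinP Q1 P; have [w_ori w_acyc] := proj2_sig (join Q1 P).
  apply/P_leP => e; rewrite acyc_orient_byE; apply: ge_fP_fQ1_ge_fQ2 w_ori w_acyc _ _ e => e'.
    by have := Pj e'; rewrite acyc_orient_byE.
  by have := Q1j e'; rewrite acyc_orient_byE.
have meet_le_Q1 : P_le (meet Q2 P) Q1.
  have [/P_leP mQ2 [/P_leP mP _]] := meetP Q2 P; have [w_ori w_acyc] := proj2_sig (meet Q2 P).
  apply/P_leP => e; rewrite acyc_orient_byE; apply: le_fP_fQ2_le_fQ1 w_ori w_acyc _ _ e => e'.
    by have := mP e'; rewrite acyc_orient_byE.
  by have := mQ2 e'; rewrite acyc_orient_byE.
pose eC : edge H := exist _ (l, r) lr_in; have := distr Q2 Q1 P.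
rewrite (is_meet_idl (meetP _ _) Q2_le_join) (is_meet_idr (meetP _ _) Q1_le_Q2).
rewrite (is_join_idl (joinP _ _) meet_le_Q1) => /(congr1 (fun q : acyc_orient H => sval q eC)).
rewrite !acyc_orient_byE /fQ1 /fQ2 /=.
have -> : l <= a <= r by rewrite l_le_a; lia.
have -> : l <= d <= r by rewrite d_le_r; lia.
by move=> da; move: b_lt_d; rewrite da; lia.
Qed.

End Pentagon.

Lemma distributive_no_nested_overlap n (H : {set 'I_n * 'I_n}) :
  interval_hypergraph H -> distributive_lattice (@P_le n H) -> no_nested_overlap H.
Proof.
move=> H_intv distr a b c d l r ab cd lr la ac cb bd dr.
exact: (pentagon_not_distributive H_intv ac cb bd ab cd lr la dr distr).
Qed.

Section Blocks.
Variables (n : nat) (H : {set 'I_n * 'I_n}).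
Hypothesis H_intv : interval_hypergraph H.
Notation ori := {ffun edge H -> 'I_n}.
Implicit Types (e K : edge H) (O : ori).

Definition lo e : 'I_n := (val e).1.
Definition hi e : 'I_n := (val e).2.

Lemma edge_in K : (lo K, hi K) \in H.
Proof. by case: K => [[a b] ?]. Qed.

Lemma lo_le_hi K : lo K <= hi K.
Proof. exact: edge_le H_intv K. Qed.

Lemma mem_edge e (k : 'I_n) : (k \in intv (val e)) = (lo e <= k <= hi e).
Proof. exact: mem_intv. Qed.

Lemma edge_eq K e : lo K = lo e -> hi K = hi e -> K = e.
Proof. by move=> lo_eq hi_eq; apply/val_inj/injective_projections. Qed.

Definition proper_subedge K e := [&& K != e, lo e <= lo K & hi K <= hi e].

Definition width e := hi e - lo e.

Lemma width_lt K e : proper_subedge K e -> width K < width e.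
Proof.
case/and3P=> Ke le_lo le_hi; rewrite /width; have := lo_le_hi K.
have [lo_eq | lo_lt] := eqVneq (lo e : nat) (lo K); last lia.
have [hi_eq | hi_lt] := eqVneq (hi K : nat) (hi e); last lia.
by move: Ke; rewrite (edge_eq (val_inj (esym lo_eq)) (val_inj hi_eq)) eqxx.
Qed.

Definition cut e (p : nat) : bool :=
  ~~ [exists K, proper_subedge K e && (lo K <= p < hi K)].

Definition block e (v : nat) : nat := \sum_(lo e <= p < v) cut e p.

Definition last_block e : nat := block e (hi e).

Lemma not_cutP e p :
  reflect (exists2 K, proper_subedge K e & lo K <= p < hi K) (~~ cut e p).
Proof.
rewrite negbK; apply: (iffP existsP) => [[K /andP [] ] | [K sub p_in]]; first by exists K.
by exists K; rewrite sub.
Qed.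

Lemma block_split e u v : lo e <= u -> u <= v ->
  block e v = block e u + \sum_(u <= p < v) cut e p.
Proof. by move=> le_u le_uv; rewrite /block (@big_cat_nat _ _ _ u). Qed.

Lemma block_mono e : {homo block e : u v / u <= v}.
Proof.
move=> u v le_uv; have [le_u | lt_u] := leqP (lo e) u.
  by rewrite (block_split le_u le_uv) leq_addr.
by rewrite /block big_geq // ltnW.
Qed.

Lemma block_eq_uncut e u v : lo e <= u -> u <= v -> block e v <= block e u ->
  forall p, u <= p < v -> ~~ cut e p.
Proof.
move=> le_u le_uv; rewrite (block_split le_u le_uv) -{2}[block e u]addn0 leq_add2l.
rewrite leqn0 sum_nat_seq_eq0 => /allP uncut p p_in.
by move: (uncut p); rewrite mem_index_iota p_in => /(_ isT); case: (cut e p).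
Qed.

Lemma block_onto e k : k <= last_block e ->
  exists2 v : 'I_n, lo e <= v <= hi e & block e v = k.
Proof.
suff onto_upto m : lo e + m <= hi e -> k <= block e (lo e + m) ->
    exists2 v : 'I_n, lo e <= v <= lo e + m & block e v = k.
  move=> k_le; have := onto_upto (hi e - lo e); rewrite subnKC ?lo_le_hi //.
  by apply.
elim: m => [_ | m IHm le_hi] /=.
  rewrite addn0 /block big_geq // leqn0 => /eqP <-.
  by exists (lo e); rewrite ?leqnn /block ?big_geq.
have [k_le _ | k_gt k_le] := leqP k (block e (lo e + m)).
  by have [|v v_in <-] := IHm _ k_le; [lia | exists v => //; lia].
have v_lt : lo e + m.+1 < n by apply: leq_ltn_trans le_hi (ltn_ord _).
exists (Ordinal v_lt); rewrite /= ?leq_addr ?leqnn //.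
by move: k_gt k_le; rewrite addnS /block big_nat_recr ?leq_addr //=; case: (cut e _) => /=; lia.
Qed.

Lemma block_const_sub e K (u w : nat) : proper_subedge K e ->
  lo K <= u <= hi K -> lo K <= w <= hi K -> block e u = block e w.
Proof.
wlog le_uw : u w / u <= w.
  move=> gen sub u_in w_in; have [le | /ltnW le] := leqP u w; first exact: gen.
  by rewrite (gen w u).
move=> sub /andP [u_lo u_hi] /andP [w_lo w_hi]; have /and3P [_ sub_lo _] := sub.
rewrite (block_split (leq_trans sub_lo u_lo) le_uw) big_nat_cond big1 ?addn0 //.
move=> p /andP [/andP [u_p p_w] _]; apply/eqP; rewrite eqb0; apply/not_cutP.
by exists K => //; apply/andP; split; lia.
Qed.

Definition consistent O :=
  forall K e, proper_subedge K e -> O e \in intv (val K) -> O e = O K.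

Lemma acyclic_consistent O : is_orientation O -> is_acyclic O -> consistent O.
Proof.
move=> O_ori O_acyc K e /and3P [_ lo_le hi_le] Oe_in; apply/eqP; apply: contraT => ne.
exfalso; apply: (acyclic_2cycle O_acyc (e1 := K) (e2 := e)) => //.
by move: (O_ori K); rewrite !mem_edge; lia.
Qed.

End Blocks.

Section Laminar.
Variables (n : nat) (H : {set 'I_n * 'I_n}).
Hypothesis H_intv : interval_hypergraph H.
Hypotheses (no_overlap : no_nested_overlap H) (closed : overlap_closed H).
Notation ori := {ffun edge H -> 'I_n}.
Implicit Types e K : edge H.

Lemma sub_nested K K' e : proper_subedge K e -> proper_subedge K' e ->
  maxn (lo K) (lo K') <= minn (hi K) (hi K') ->
  (lo K <= lo K' /\ hi K' <= hi K) \/ (lo K' <= lo K /\ hi K <= hi K').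
Proof.
move=> /and3P [_ eK1 eK2] /and3P [_ eK1' eK2'] meet.
have [le1 | lt1] := leqP (lo K) (lo K'); have [le2 | lt2] := leqP (hi K') (hi K).
- by left.
- have [eq1 | ne1] := eqVneq (lo K : nat) (lo K'); first by right; lia.
  by case: (no_overlap (edge_in K) (edge_in K') (edge_in e)); lia.
- have [eq2 | ne2] := eqVneq (hi K : nat) (hi K'); first by right; lia.
  by case: (no_overlap (edge_in K') (edge_in K) (edge_in e)); lia.
- by right; lia.
Qed.

Lemma cover_uncut e (u v : nat) : lo e <= u < v -> v <= hi e ->
  (forall p, u <= p < v -> ~~ cut e p) ->
  exists K, [/\ proper_subedge K e, lo K <= u & v <= hi K].
Proof.
move=> /andP [le_u lt_uv] le_v uncut.
suff cover_upto d : u + d < v -> exists K, [/\ proper_subedge K e, lo K <= u & u + d < hi K].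
  by have [|K [sub K_lo K_hi]] := cover_upto (v - u).-1; [lia | exists K; split=> //; lia].
elim: d => [|d IHd] lt_d.
  have [|K sub /andP [K_lo K_hi]] := not_cutP _ _ (uncut u _); first by lia.
  by exists K; split; lia.
have [|K [sub K_lo K_hi]] := IHd; first by lia.
have [|K' sub' /andP [K'_lo K'_hi]] := not_cutP _ _ (uncut (u + d.+1) _); first by lia.
have [|[_ le_hi] | [le_lo _]] := sub_nested sub sub'; first by lia.
  by exists K; split; lia.
by exists K'; split; lia.
Qed.

Lemma consistent_le_block (x y : ori) :
  is_orientation x -> is_orientation y -> consistent x -> consistent y ->
  (forall e, x e <= y e) <-> (forall e, block e (x e) <= block e (y e)).
Proof.
move=> x_ori y_ori x_cons y_cons; split=> [x_le e | bx_le e]; first exact: block_mono.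
have [w] := ubnP (width e); elim: w e => // w IHw e width_e.
move: (x_ori e) (y_ori e); rewrite !mem_edge => /andP [x_lo x_hi] /andP [y_lo y_hi].
rewrite leqNgt; apply/negP => y_lt_x.
have [K [sub K_lo K_hi]] :=
  cover_uncut (introT andP (conj y_lo y_lt_x)) x_hi (block_eq_uncut y_lo (ltnW y_lt_x) (bx_le e)).
have xK : x e = x K by apply: x_cons; rewrite ?mem_edge //; lia.
have yK : y e = y K by apply: y_cons; rewrite ?mem_edge //; lia.
by have := IHw K (leq_trans (width_lt H_intv sub) width_e); rewrite -xK -yK leqNgt y_lt_x.
Qed.

Lemma crossing_meet (A B : edge H) : lo A < lo B -> lo B <= hi A -> hi A < hi B ->
  exists N : edge H, lo N = lo B /\ hi N = hi A.
Proof.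
move=> lt_lo le_mid lt_hi; have [lt_mid | gt_mid | eq_mid] := ltngtP (lo B) (hi A).
- by exists (exist (fun h => h \in H) _ (closed (edge_in A) (edge_in B) lt_lo lt_mid lt_hi)).
- by rewrite ltnNge le_mid in gt_mid.
- have eq_mid' : lo B = hi A := val_inj eq_mid.
  by exists (exist (fun h => h \in H) (lo B, lo B) (H_intv.2 _)); split; rewrite /lo /hi /=.
Qed.

End Laminar.

Section ConsistentAcyclic.
Variables (n : nat) (H : {set 'I_n * 'I_n}).
Hypothesis H_intv : interval_hypergraph H.
Hypotheses (no_overlap : no_nested_overlap H) (closed : overlap_closed H).
Variable O : {ffun edge H -> 'I_n}.
Hypotheses (O_ori : is_orientation O) (O_cons : consistent O).
Implicit Types e p : edge H.

Lemma head_in e : lo e <= O e <= hi e.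
Proof. by rewrite -mem_edge O_ori. Qed.

Lemma cyc_step_shape e1 e2 : cyc_step O e1 e2 ->
  [\/ proper_subedge e2 e1,
      lo e2 < lo e1 <= hi e2 /\ hi e2 < hi e1 |
      lo e1 < lo e2 <= hi e1 /\ hi e1 < hi e2].
Proof.
case/andP=> in1 ne; have in2 := head_in e2; have := in1; rewrite mem_edge => in1'.
have not_sup : ~ (lo e2 <= lo e1 /\ hi e1 <= hi e2).
  case=> le_lo le_hi; have [eq12 | ne12] := eqVneq e1 e2; first by rewrite eq12 eqxx in ne.
  by move/eqP: ne; apply; apply: O_cons => //; apply/and3P.
have [le_lo | lt_lo] := leqP (lo e1) (lo e2); have [le_hi | lt_hi] := leqP (hi e2) (hi e1).
- apply: Or31; apply/and3P; split=> //.
  by apply/eqP => eq21; case: not_sup; rewrite eq21.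
- have [eq_lo | ne_lo] := eqVneq (lo e1 : nat) (lo e2); first by case: not_sup; lia.
  by apply: Or33; lia.
- have [eq_hi | ne_hi] := eqVneq (hi e2 : nat) (hi e1); first by case: not_sup; lia.
  by apply: Or32; lia.
- by case: not_sup; lia.
Qed.

Lemma heads_in_common_sub N e1 e2 : proper_subedge N e1 -> proper_subedge N e2 ->
  O e1 \in intv (val N) -> O e2 \in intv (val N) -> O e1 = O e2.
Proof. by move=> sub1 sub2 in1 in2; apply: etrans (O_cons sub1 in1) (esym (O_cons sub2 in2)). Qed.

(* In both lemmas, the intersection [N] of the two crossing edges is an edge containing
   [O e2], so by consistency it cannot contain [O e1]. *)
Lemma head_right_of_left_cross e1 e2 : cyc_step O e1 e2 ->
  lo e2 < lo e1 -> lo e1 <= hi e2 -> hi e2 < hi e1 -> hi e2 < O e1.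
Proof.
case/andP=> in1 ne lt_lo le_mid lt_hi; rewrite ltnNge; apply/negP => le_O.
have [N [N_lo N_hi]] := crossing_meet H_intv closed lt_lo le_mid lt_hi.
move: (head_in e1) (head_in e2) in1; rewrite mem_edge => in1 in2 /andP [in21 _].
have N_e2 : N != e2 by apply: contraTneq lt_lo => <-; rewrite N_lo ltnn.
have N_e1 : N != e1 by apply: contraTneq lt_hi => <-; rewrite N_hi ltnn.
case/eqP: ne; apply: (heads_in_common_sub (N := N)).
- by apply/and3P; split; rewrite ?N_lo ?N_hi // ltnW.
- by apply/and3P; split; rewrite ?N_lo ?N_hi // ltnW.
- by rewrite mem_edge N_lo N_hi; lia.
- by rewrite mem_edge N_lo N_hi; lia.
Qed.

Lemma head_left_of_right_cross e1 e2 : cyc_step O e1 e2 ->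
  lo e1 < lo e2 -> lo e2 <= hi e1 -> hi e1 < hi e2 -> O e1 < lo e2.
Proof.
case/andP=> in1 ne lt_lo le_mid lt_hi; rewrite ltnNge; apply/negP => le_O.
have [N [N_lo N_hi]] := crossing_meet H_intv closed lt_lo le_mid lt_hi.
move: (head_in e1) (head_in e2) in1; rewrite mem_edge => in1 in2 /andP [_ in21].
have N_e2 : N != e2 by apply: contraTneq lt_hi => <-; rewrite N_hi ltnn.
have N_e1 : N != e1 by apply: contraTneq lt_lo => <-; rewrite N_lo ltnn.
case/eqP: ne; apply: (heads_in_common_sub (N := N)).
- by apply/and3P; split; rewrite ?N_lo ?N_hi // ltnW.
- by apply/and3P; split; rewrite ?N_lo ?N_hi // ltnW.
- by rewrite mem_edge N_lo N_hi; lia.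
- by rewrite mem_edge N_lo N_hi; lia.
Qed.

Definition head_right_of_cross e := [exists p : edge H,
  [&& lo p < lo e, lo e <= hi p, hi p < hi e & hi p < O e]].

Definition head_left_of_cross e := [exists p : edge H,
  [&& lo e < lo p, lo p <= hi e, hi e < hi p & O e < lo p]].

Lemma right_cross_step e1 e2 : cyc_step O e1 e2 ->
  head_right_of_cross e2 -> head_right_of_cross e1 && (hi e2 < hi e1).
Proof.
move=> step /existsP [p /and4P [p1 p2 p3 p4]]; have [k1 k2] := (head_in e1, head_in e2).
have /andP [in1 ne] := step; rewrite mem_edge in in1.
case: (cyc_step_shape step) => [/and3P [s3 s1 s2] | [/andP [s1a s1b] s2] | [/andP [s1a s1b] s2]].
- have [q1 | q1] := leqP (lo e1) (lo p).
    by case: (no_overlap (edge_in p) (edge_in e2) (edge_in e1)); lia.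
  have [q2 | q2] := ltnP (lo e1) (lo e2).
    have [N [n1 n2]] := crossing_meet H_intv closed q1 (leq_trans (ltnW q2) p2) (leq_trans p3 s2).
    by case: (no_overlap (edge_in N) (edge_in e2) (edge_in e1)); rewrite ?n1 ?n2; lia.
  have q4 : hi e2 < hi e1.
    rewrite ltn_neqAle s2 andbT; apply: contra s3 => /eqP q4.
    by apply/eqP/edge_eq; apply: val_inj => //=; lia.
  have q5 : hi e2 < O e1.
    rewrite ltnNge; apply/negP => q5; case/eqP: ne; symmetry; apply: O_cons.
      exact/and3P.
    by rewrite mem_edge; lia.
  by rewrite q4 andbT; apply/existsP; exists p; apply/and4P; split; lia.
- have q := head_right_of_left_cross step s1a s1b s2.
  by rewrite s2 andbT; apply/existsP; exists e2; apply/and4P; split; lia.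
- exfalso; have [N [n1 n2]] := crossing_meet H_intv closed s1a s1b s2.
  have [q1 | q1] := leqP (lo e1) (lo p).
    by case: (no_overlap (edge_in p) (edge_in N) (edge_in e1)); rewrite ?n1 ?n2; lia.
  have [|N' [n1' n2']] := crossing_meet H_intv closed q1 (leq_trans (ltnW s1a) p2); first by lia.
  by case: (no_overlap (edge_in N') (edge_in N) (edge_in e1)); rewrite ?n1 ?n2 ?n1' ?n2'; lia.
Qed.

Lemma left_cross_step e1 e2 : cyc_step O e1 e2 ->
  head_left_of_cross e2 -> head_left_of_cross e1 && (lo e1 < lo e2).
Proof.
move=> step /existsP [p /and4P [p1 p2 p3 p4]]; have [k1 k2] := (head_in e1, head_in e2).
have /andP [in1 ne] := step; rewrite mem_edge in in1.
case: (cyc_step_shape step) => [/and3P [s3 s1 s2] | [/andP [s1a s1b] s2] | [/andP [s1a s1b] s2]].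
- have [q1 | q1] := leqP (hi p) (hi e1).
    by case: (no_overlap (edge_in e2) (edge_in p) (edge_in e1)); lia.
  have [q2 | q2] := ltnP (hi e2) (hi e1).
    have [N [n1 n2]] :=
      crossing_meet H_intv closed (leq_ltn_trans s1 p1) (leq_trans p2 (ltnW q2)) q1.
    by case: (no_overlap (edge_in e2) (edge_in N) (edge_in e1)); rewrite ?n1 ?n2; lia.
  have q4 : lo e1 < lo e2.
    rewrite ltn_neqAle s1 andbT; apply: contra s3 => /eqP q4.
    by apply/eqP/edge_eq; apply: val_inj => //=; lia.
  have q5 : O e1 < lo e2.
    rewrite ltnNge; apply/negP => q5; case/eqP: ne; symmetry; apply: O_cons.
      exact/and3P.
    by rewrite mem_edge; lia.
  by rewrite q4 andbT; apply/existsP; exists p; apply/and4P; split; lia.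
- exfalso; have [N [n1 n2]] := crossing_meet H_intv closed s1a s1b s2.
  have [q1 | q1] := leqP (hi p) (hi e1).
    by case: (no_overlap (edge_in N) (edge_in p) (edge_in e1)); rewrite ?n1 ?n2; lia.
  have [|N' [n1' n2']] := crossing_meet H_intv closed _ (leq_trans p2 (ltnW s2)) q1; first by lia.
  by case: (no_overlap (edge_in N) (edge_in N') (edge_in e1)); rewrite ?n1 ?n2 ?n1' ?n2'; lia.
- have q := head_left_of_right_cross step s1a s1b s2.
  by rewrite s1a andbT; apply/existsP; exists e2; apply/and4P; split; lia.
Qed.

Lemma cyc_step_width e1 e2 : cyc_step O e1 e2 ->
  ~~ head_right_of_cross e1 -> ~~ head_left_of_cross e1 -> width e2 < width e1.
Proof.
move=> step no_right no_left; have k1 := head_in e1.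
case: (cyc_step_shape step) => [sub | [/andP [s1a s1b] s2] | [/andP [s1a s1b] s2]].
- exact (width_lt H_intv sub).
- have q := head_right_of_left_cross step s1a s1b s2.
  by case/negP: no_right; apply/existsP; exists e2; apply/and4P; split; lia.
- have q := head_left_of_right_cross step s1a s1b s2.
  by case/negP: no_left; apply/existsP; exists e2; apply/and4P; split; lia.
Qed.

(* Going around a cycle, [hi] would strictly decrease if some head lies right of a
   crossing edge, [lo] would strictly increase if some head lies left of one, and
   otherwise the width would strictly decrease. *)
Lemma consistent_acyclic : is_acyclic O.
Proof.
case=> s [size_s cyc_s].
have /hasPn no_right := cycle_measure_backward (f := fun e => hi e : nat) right_cross_step cyc_s.
have left_step e1 e2 : cyc_step O e1 e2 -> head_left_of_cross e2 ->
    head_left_of_cross e1 && (n - lo e2 < n - lo e1).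
  by move=> step /(left_cross_step step) /andP [-> lt_lo]; have := ltn_ord (lo e2); lia.
have /hasPn no_left := cycle_measure_backward left_step cyc_s.
pose no_cross e := ~~ head_right_of_cross e && ~~ head_left_of_cross e.
have width_step e1 e2 : cyc_step O e1 e2 -> no_cross e1 -> width e2 < width e1.
  by move=> step /andP []; apply: cyc_step_width.
have all_s : all no_cross s by apply/allP => e es; rewrite /no_cross no_right ?no_left.
by move: size_s; rewrite (cycle_measure_forward width_step cyc_s all_s).
Qed.

End ConsistentAcyclic.

Section Realize.
Variables (n : nat) (H : {set 'I_n * 'I_n}).
Hypothesis H_intv : interval_hypergraph H.
Hypotheses (no_overlap : no_nested_overlap H) (closed : overlap_closed H).
Implicit Types e K : edge H.
Variable t : edge H -> nat.
Hypothesis t_le : forall e, t e <= last_block e.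

Definition pick_in_block e : 'I_n :=
  if [pick v : 'I_n | (lo e <= v <= hi e) && (block e v == t e)] is Some v then v else lo e.

Lemma pick_in_blockP e : lo e <= pick_in_block e <= hi e /\ block e (pick_in_block e) = t e.
Proof.
rewrite /pick_in_block; case: pickP => [v /andP [v_in /eqP] // | none].
have [v v_in vt] := block_onto H_intv (t_le e).
by move: (none v); rewrite v_in vt eqxx.
Qed.

Definition sub_at e K (v : nat) := proper_subedge K e && (lo K <= v <= hi K).

Definition top_sub_at e (v : nat) : option (edge H) :=
  [pick K | sub_at e K v && [forall K', sub_at e K' v ==> (lo K <= lo K') && (hi K' <= hi K)]].

Lemma top_sub_at_None e v : top_sub_at e v = None -> forall K, ~~ sub_at e K v.
Proof.
move=> none K; apply/negP => K_at.
have [K0 /[dup] K0_at /andP [sub0 v0] K0_max] := @arg_maxnP _ K (sub_at e ^~ v) (@width n H) K_at.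
move: none; rewrite /top_sub_at; case: pickP => // /(_ K0) + _.
rewrite K0_at /= => /negbT/negP; apply.
apply/forallP => K'; apply/implyP => /[dup] K'_at /andP [sub' v'].
have [|[-> ->] // | [le_lo le_hi]] := sub_nested no_overlap sub0 sub'; first by lia.
have := K0_max K' K'_at; rewrite /width; have := lo_le_hi H_intv K0; lia.
Qed.

Lemma top_sub_at_Some e v K : top_sub_at e v = Some K ->
  sub_at e K v /\ forall K', sub_at e K' v -> lo K <= lo K' /\ hi K' <= hi K.
Proof.
rewrite /top_sub_at; case: pickP => [K0 /andP [K0_at /forallP K0_max] [<-] | //].
by split=> // K' /[dup] K'_at /(implyP (K0_max K')) /andP.
Qed.

Lemma width_sub_at e K v : sub_at e K v -> width K < width e.
Proof. by case/andP=> sub _; exact (width_lt H_intv sub). Qed.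

Fixpoint descend (fuel : nat) e : 'I_n :=
  if fuel is fuel'.+1 then
    if top_sub_at e (pick_in_block e) is Some K then descend fuel' K else pick_in_block e
  else lo e.

Lemma descend_fuel f1 f2 e : width e < f1 -> width e < f2 -> descend f1 e = descend f2 e.
Proof.
elim: f1 f2 e => [|f1 IHf] [|f2] e //= lt1 lt2.
case top: (top_sub_at e _) => [K|] //; have /width_sub_at lt_K := (top_sub_at_Some top).1.
by apply: IHf; lia.
Qed.

Lemma descendP f e : width e < f -> lo e <= descend f e <= hi e /\ block e (descend f e) = t e.
Proof.
elim: f e => [|f IHf] e //= lt_f.
case top: (top_sub_at e _) => [K|]; last exact: pick_in_blockP.
have K_at := (top_sub_at_Some top).1; have /andP [sub v_in] := K_at.
have [d_in _] := IHf K (leq_trans (width_sub_at K_at) lt_f).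
have /and3P [_ le_lo le_hi] := sub; split; first lia.
by have [_ <-] := pick_in_blockP e; apply: block_const_sub sub _ _.
Qed.

Definition realize_head e : 'I_n := descend n e.

Lemma width_lt_n e : width e < n.
Proof. by rewrite /width; have := ltn_ord (hi e); lia. Qed.

Lemma realize_headP e : lo e <= realize_head e <= hi e /\ block e (realize_head e) = t e.
Proof. exact: descendP (width_lt_n e). Qed.

Lemma realize_headE e : realize_head e =
  if top_sub_at e (pick_in_block e) is Some K then realize_head K else pick_in_block e.
Proof.
have n_pos : 0 < n := leq_ltn_trans (leq0n _) (width_lt_n e).
rewrite /realize_head; have -> : descend n e = descend n.-1.+1 e by rewrite prednK.
rewrite /=.
case top: (top_sub_at e _) => [K|] //; have /width_sub_at lt_K := (top_sub_at_Some top).1.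
by apply: descend_fuel; have := width_lt_n e; lia.
Qed.

Definition realize : {ffun edge H -> 'I_n} := [ffun e => realize_head e].

Lemma realize_ori : is_orientation realize.
Proof. by move=> e; rewrite ffunE mem_edge; apply: (realize_headP e).1. Qed.

Lemma realize_consistent : consistent realize.
Proof.
move=> K e; rewrite !ffunE; have [w] := ubnP (width e); elim: w K e => // w IHw K e lt_w sub.
rewrite realize_headE; case top: (top_sub_at e _) => [K0|] head_in; last first.
  by have := top_sub_at_None top K; rewrite /sub_at sub -mem_edge head_in.
have [/[dup] K0_at /andP [sub0 v0] K0_max] := top_sub_at_Some top.
have [head0_lo head0_hi] := andP (realize_headP K0).1.
have [|[le_lo le_hi] | [le_lo le_hi]] := sub_nested no_overlap sub0 sub.
- by move: head_in; rewrite mem_edge; lia.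
- have [-> // | ne] := eqVneq K K0.
  apply: IHw (leq_trans (width_sub_at K0_at) lt_w) _ head_in.
  by rewrite /proper_subedge ne le_lo le_hi.
- have K_at : sub_at e K (pick_in_block e) by rewrite /sub_at sub; lia.
  have [le_lo' le_hi'] := K0_max K K_at.
  by rewrite (@edge_eq n H K K0); apply: val_inj => /=; lia.
Qed.

Lemma realize_acyclic : is_acyclic realize.
Proof. exact (consistent_acyclic H_intv no_overlap closed realize_ori realize_consistent). Qed.

Lemma block_realize e : block e (realize e) = t e.
Proof. by rewrite ffunE; apply: (realize_headP e).2. Qed.

End Realize.

Section ProductOfChains.
Variables (n : nat) (H : {set 'I_n * 'I_n}).
Hypothesis H_intv : interval_hypergraph H.
Hypotheses (no_overlap : no_nested_overlap H) (closed : overlap_closed H).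

Notation nedges := #|{: edge H}|.

Definition chain_top (i : 'I_nedges) : nat := last_block (enum_val i).

Lemma block_head_lt (x : acyc_orient H) i :
  block (enum_val i) (sval x (enum_val i)) < (chain_top i).+1.
Proof.
rewrite ltnS; apply: block_mono.
by move: (proj1 (proj2_sig x) (enum_val i)); rewrite mem_edge => /andP [].
Qed.

Definition blocks_of (x : acyc_orient H) : forall i, 'I_(chain_top i).+1 :=
  fun i => Ordinal (block_head_lt x i).

Lemma chain_top_le (g : forall i, 'I_(chain_top i).+1) e : g (enum_rank e) <= last_block e.
Proof. by case: (g (enum_rank e)) => v /=; rewrite /chain_top enum_rankK. Qed.

Definition of_blocks (g : forall i, 'I_(chain_top i).+1) : acyc_orient H :=
  exist _ (realize (fun e => g (enum_rank e)))
          (conj (realize_ori H_intv (chain_top_le g))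
                (realize_acyclic H_intv no_overlap closed (chain_top_le g))).

Lemma of_blocksK : cancel of_blocks blocks_of.
Proof.
move=> g; apply: functional_extensionality_dep => i; apply: val_inj => /=.
rewrite (block_realize H_intv (chain_top_le g)).
exact (congr1 (fun j => nat_of_ord (g j)) (enum_valK i)).
Qed.

Lemma P_le_blocks x y : P_le x y <-> forall i, blocks_of x i <= blocks_of y i.
Proof.
have [[x_ori x_acyc] [y_ori y_acyc]] := (proj2_sig x, proj2_sig y).
rewrite P_leP (consistent_le_block H_intv no_overlap x_ori y_ori
  (acyclic_consistent x_ori x_acyc) (acyclic_consistent y_ori y_acyc)).
split=> le_xy i; first exact: le_xy.
by have := le_xy (enum_rank i); rewrite /= enum_rankK.
Qed.

Lemma blocks_ofK : cancel blocks_of of_blocks.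
Proof. by move=> x; apply: P_le_anti; apply/P_le_blocks => i; rewrite of_blocksK. Qed.

Lemma iso_product_of_chains_P_le : iso_product_of_chains (@P_le n H).
Proof.
exists nedges, chain_top, blocks_of; split; last exact: P_le_blocks.
by exists of_blocks; [apply: blocks_ofK | apply: of_blocksK].
Qed.

End ProductOfChains.

Lemma iso_product_of_chains_distributive (T : Type) (le : relation T) :
  iso_product_of_chains le -> distributive_lattice le.
Proof.
case=> k [m [f [[g fK gK] f_le]]].
pose minf (a b : forall i, 'I_(m i).+1) i := if a i <= b i then a i else b i.
pose maxf (a b : forall i, 'I_(m i).+1) i := if a i <= b i then b i else a i.
have f_eq x y : (forall i, f x i = f y i) -> x = y.
  by move=> eq_xy; apply: (can_inj fK); apply: functional_extensionality_dep.
split.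
  split=> [x | ]; first exact/f_le.
  split=> [x y /f_le xy /f_le yx | x y z /f_le xy /f_le yz]; last first.
    by apply/f_le => i; apply: leq_trans (xy i) (yz i).
  by apply: f_eq => i; apply/val_inj/eqP; rewrite eqn_leq xy yx.
exists (fun x y => g (minf (f x) (f y))), (fun x y => g (maxf (f x) (f y))).
split; [|split].
- move=> x y; split; [|split] => [||w /f_le wx /f_le wy]; apply/f_le => i;
    rewrite gK /minf; case: ifP => //=; lia.
- move=> x y; split; [|split] => [||w /f_le xw /f_le yw]; apply/f_le => i;
    rewrite gK /maxf; case: ifP => //=; lia.
- move=> x y z; apply: f_eq => i; apply: val_inj; rewrite !gK /minf /maxf.
  by repeat (case: ifP => /=); lia.
Qed.

Theorem corollary5p32 (n : nat) (H : {set 'I_n * 'I_n}) :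
  interval_hypergraph H ->
  (distributive_lattice (@P_le n H) <-> iso_product_of_chains (@P_le n H)).
Proof.
move=> H_intv; split; last exact: iso_product_of_chains_distributive.
move=> distr; have no_overlap := distributive_no_nested_overlap H_intv distr.
have closed : overlap_closed H.
  apply: joins_overlap_closed H_intv _ => x y.
  by have [_ [meet [join [_ [joinP _]]]]] := distr; exists (join x y).
exact: iso_product_of_chains_P_le H_intv no_overlap closed.
Qed.
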